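(* Let $G$ be a connected signed digraph. There exists a nilpotent degree-bounded finite dynamical system on $G$ if and only if $G$ is not a signed cycle.
   Context: A finite dynamical system (FDS) with $n$ components is a map $f=(f_1,\dots,f_n):X\to X$ where $X=X_1\times\cdots\times X_n$ and each $X_i$ is a nonempty finite interval of integers; $f^k$ denotes the $k$-fold composition. $f$ is nilpotent if $f^k$ is a constant map for some positive integer $k$. A signed digraph is a pair $G=(V,E)$ with $E\subseteq V\times V\times\{+,-\}$; $(j,i,s)\in E$ is an arc from $j$ to $i$ of sign $s$ (loops allowed; $G$ may have both a positive and a negative arc from $j$ to $i$, called parallel arcs). Write $G^+_i=\{j:(j,i,+)\in E\}$, $G^-_i=\{j:(j,i,-)\in E\}$, $G_i=G^+_i\cup G^-_i$. The in-degree is $d^{\mathrm{in}}_G(i)=|G^+_i|+|G^-_i|$ and the out-degree $d^{\mathrm{out}}_G(i)$ is the number of positive arcs leaving $i$ plus the number of negative arcs leaving $i$. $G$ is connected if its underlying undirected graph is connected. The underlying unsigned digraph $|G|$ has vertex set $V$ and an arc from $j$ to $i$ iff $j\in G_i$. $G$ is a signed cycle if $|G|$ is a directed cycle (through all vertices, each exactly once; a single vertex with a loop counts) and $G$ has no parallel arcs. The interaction graph of an FDS $f$ is the signed digraph on $\{1,\dots,n\}$ with a positive (resp. negative) arc from $j$ to $i$ iff there is $x\in X$ with $x_j<\max(X_j)$ such that $f_i(x+e_j)-f_i(x)$ is positive (resp. negative), $e_j$ the $j$-th unit vector. $f$ is an FDS on $G$ if $G$ is its interaction graph. $f$ is degree-bounded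 if, with $G$ its interaction graph, for every $i$: $|X_i|=2$ if $d^{\mathrm{out}}_G(i)=0<d^{\mathrm{in}}_G(i)$, and $|X_i|\le d^{\mathrm{out}}_G(i)+1$ otherwise. *)

From mathcomp Require Import all_boot all_order all_algebra.
Set Implicit Arguments. Unset Strict Implicit. Unset Printing Implicit Defensive.
Import Order.TTheory GRing.Theory Num.Theory.
Local Open Scope ring_scope.

(* A signed digraph on the vertex set 'I_n (= {1,...,n} shifted to {0,...,n-1}).
   [pos G j i] : there is a positive arc from j to i;
   [neg G j i] : there is a negative arc from j to i.
   Loops and parallel arcs (pos and neg both) are allowed. *)
Record sdigraph (n : nat) := SDigraph { pos : rel 'I_n; neg : rel 'I_n }.

Section Graphs.
Variable n : nat.
Implicit Types G : sdigraph n.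

Definition uarc G : rel 'I_n := fun j i => pos G j i || neg G j i.

Definition indeg G (i : 'I_n) : nat :=
  (#|[set j | pos G j i]| + #|[set j | neg G j i]|)%N.
Definition outdeg G (j : 'I_n) : nat :=
  (#|[set i | pos G j i]| + #|[set i | neg G j i]|)%N.

Definition sconnected G : Prop :=
  forall u v : 'I_n, connect (fun a b => uarc G a b || uarc G b a) u v.

Definition signed_cycle G : Prop :=
  (exists s : seq 'I_n,
     [/\ s != [::], perm_eq s (enum 'I_n) &
         forall j i, uarc G j i = (i == next s j)])
  /\ (forall j i, ~~ (pos G j i && neg G j i)).
End Graphs.

Section FDS.
Variable n : nat.
(* X_i = [lo i, hi i] (integers); states are maps 'I_n -> int. *)
Variables lo hi : 'I_n -> int.

Definition inX (x : 'I_n -> int) : Prop := forall i, lo i <= x i <= hi i.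

Definition incr (x : 'I_n -> int) (j : 'I_n) : 'I_n -> int :=
  fun k => if k == j then x k + 1 else x k.

Variable f : ('I_n -> int) -> ('I_n -> int).

Definition maps_X : Prop := forall x, inX x -> inX (f x).

(* f is an FDS on G : G is its interaction graph *)
Definition fds_on (G : sdigraph n) : Prop :=
  forall j i : 'I_n,
    (pos G j i <-> exists x, [/\ inX x, x j < hi j & f (incr x j) i - f x i > 0])
 /\ (neg G j i <-> exists x, [/\ inX x, x j < hi j & f (incr x j) i - f x i < 0]).

Definition nilpotent : Prop :=
  exists k : nat, (0 < k)%N /\
    exists c : 'I_n -> int, forall x, inX x -> forall i, iter k f x i = c i.

Definition card_X (i : 'I_n) : int := hi i - lo i + 1.

Definition degree_bounded (G : sdigraph n) : Prop :=
  forall i : 'I_n,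
    if (outdeg G i == 0%N) && (0 < indeg G i)%N then card_X i = 2
    else card_X i <= (outdeg G i).+1%:Z.
End FDS.

From mathcomp Require Import all_boot all_order all_algebra zify.
From Stdlib Require Import FunctionalExtensionality.
Import Order.TTheory GRing.Theory Num.Theory.
Set Implicit Arguments. Unset Strict Implicit. Unset Printing Implicit Defensive.

(* Call a vertex a root when it is a source or has an in-neighbour of
   out-degree at least 2.  The combinatorial core (section Roots) is that in
   a connected G which is not a signed cycle every vertex is reached from a
   root: the unreached vertices are permuted by "take the in-neighbour", so
   if there are any, G is a single cycle without parallel arcs.

   Necessity (section SignedCycle): on a signed cycle, degree-boundedness
   forces Boolean components, each component is then a bijective function of
   its unique input, so the FDS is injective and no iterate is constant.

   Sufficiency (section Construction): each non-source component takes the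
   values 0 and [active i]; it is switched by whether all its inputs sit at
   prescribed trigger values, with a polarity propagated from the roots along
   shortest paths so that the stable value of the parent never triggers the
   child.  Components then settle by induction on the distance to a root. *)

Lemma card_pred_ge1 (T : finType) (P : pred T) u : P u -> (1 <= #|[set i | P i]|)%N.
Proof.
move=> Pu; rewrite -(cards1 u); apply: subset_leq_card.
by apply/subsetP=> x; rewrite in_set1 inE => /eqP ->.
Qed.

Lemma card_pred_ge2 (T : finType) (P : pred T) u v : P u -> P v -> u != v ->
  (2 <= #|[set i | P i]|)%N.
Proof.
move=> Pu Pv uv; have <- : #|[set u; v]| = 2%N by rewrite cards2 uv.
apply: subset_leq_card.
by apply/subsetP=> x; rewrite !inE => /orP[] /eqP ->.
Qed.

Arguments card_pred_ge1 [T] P [u].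
Arguments card_pred_ge2 [T] P [u v].

Section Degrees.
Variables (n : nat) (G : sdigraph n).

Lemma uarc_outdeg j i : uarc G j i -> (0 < outdeg G j)%N.
Proof.
rewrite /uarc /outdeg => /orP[] H.
  by have := card_pred_ge1 (fun i => pos G j i) H; lia.
by have := card_pred_ge1 (fun i => neg G j i) H; lia.
Qed.

Lemma uarc_indeg j i : uarc G j i -> (0 < indeg G i)%N.
Proof.
rewrite /uarc /indeg => /orP[] H.
  by have := card_pred_ge1 (fun j => pos G j i) H; lia.
by have := card_pred_ge1 (fun j => neg G j i) H; lia.
Qed.

Lemma par_outdeg j i : pos G j i -> neg G j i -> (2 <= outdeg G j)%N.
Proof.
move=> Hp Hn; rewrite /outdeg.
have := card_pred_ge1 (fun i => pos G j i) Hp.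
have := card_pred_ge1 (fun i => neg G j i) Hn; lia.
Qed.

Lemma outdeg1_uniq j u v : (outdeg G j <= 1)%N -> uarc G j u -> uarc G j v -> u = v.
Proof.
move=> Hd Hu Hv; apply/eqP; apply: contraT => uv; move: Hd; rewrite /outdeg.
move: Hu Hv; rewrite /uarc => /orP[] Hu /orP[] Hv.
- by have := card_pred_ge2 (fun i => pos G j i) Hu Hv uv; lia.
- have := card_pred_ge1 (fun i => pos G j i) Hu.
  have := card_pred_ge1 (fun i => neg G j i) Hv; lia.
- have := card_pred_ge1 (fun i => neg G j i) Hu.
  have := card_pred_ge1 (fun i => pos G j i) Hv; lia.
- by have := card_pred_ge2 (fun i => neg G j i) Hu Hv uv; lia.
Qed.

End Degrees.

Section Roots.
Variables (n : nat) (G : sdigraph n).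

(* Roots are the vertices from which a nilpotent dynamics can be started:
   sources, and vertices with an in-neighbour of out-degree at least 2. *)
Definition source (i : 'I_n) := [forall j, ~~ uarc G j i].
Definition blocked (i : 'I_n) := [exists j, uarc G j i && (2 <= outdeg G j)%N].
Definition root (i : 'I_n) := source i || blocked i.
Definition reached (i : 'I_n) := [exists r, root r && connect (uarc G) r i].

Fixpoint within (t : nat) (i : 'I_n) : bool :=
  if t is t'.+1 then within t' i || [exists j, uarc G j i && within t' j]
  else root i.

Lemma within_mono t t' i : (t <= t')%N -> within t i -> within t' i.
Proof.
move=> /subnK <-; elim: (t' - t)%N => [//|d IH] H.
by rewrite addSn /= IH.
Qed.

Lemma within_path p r t : within t r -> path (uarc G) r p ->
  within (t + size p) (last r p).
Proof.
elim: p r t => [|a p IH] r t Hr /=; first by rewrite addn0.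
case/andP=> Hra Hp; rewrite addnS -addSn; apply: IH => //=.
by apply/orP; right; apply/existsP; exists r; rewrite Hra.
Qed.

Lemma reached_within i : reached i -> exists t, within t i.
Proof.
case/existsP=> r /andP[Hr /connectP [p Hp ->]].
by exists (size p); rewrite -(add0n (size p)); apply: within_path.
Qed.

(* A set U in which every vertex has an in-neighbour, all of them in U and of
   out-degree at most 1, is permuted by "taking the in-neighbour"; hence every
   vertex of U has exactly one out-neighbour, and it lies in U. *)
Lemma rootless_successor (U : {set 'I_n}) :
  (forall u, u \in U -> exists j, uarc G j u) ->
  (forall u j, u \in U -> uarc G j u -> (j \in U) && (outdeg G j <= 1)%N) ->
  forall w, w \in U -> exists2 u, u \in U & forall v, uarc G w v = (v == u).
Proof.
move=> Hin Hcl.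
pose pr u := odflt u [pick j | uarc G j u].
have pr_arc u : u \in U -> uarc G (pr u) u.
  move=> Hu; rewrite /pr; case: pickP => [j //|H0].
  by have [j Hj] := Hin u Hu; rewrite H0 in Hj.
have prU u : u \in U -> pr u \in U by move=> Hu; case/andP: (Hcl _ _ Hu (pr_arc u Hu)).
have pr_out u : u \in U -> (outdeg G (pr u) <= 1)%N.
  by move=> Hu; case/andP: (Hcl _ _ Hu (pr_arc u Hu)).
have pr_inj : {in U &, injective pr}.
  move=> u v Hu Hv E; apply: (outdeg1_uniq (pr_out u Hu) (pr_arc u Hu)).
  by rewrite E; exact: pr_arc.
have pr_onto : pr @: U = U.
  apply/eqP; rewrite eqEcard (card_in_imset pr_inj) leqnn andbT.
  by apply/subsetP=> w /imsetP [u Hu ->]; exact: prU.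
move=> w; rewrite -{1}pr_onto => /imsetP [u Hu ->]; exists u => // v.
apply/idP/eqP => [Hv|->]; last exact: pr_arc.
exact: outdeg1_uniq (pr_out u Hu) Hv (pr_arc u Hu).
Qed.

Lemma connected_closed_full (U : {set 'I_n}) : sconnected G ->
  (forall a b, uarc G a b -> (a \in U) = (b \in U)) ->
  forall u, u \in U -> forall v, v \in U.
Proof.
move=> Hcon HU u Hu v; move: Hu; have /connectP [p Hp ->] := Hcon u v.
elim: p u Hp => [//|b p IH] a /= /andP [Hab Hp] Ha; apply: IH Hp _.
by case/orP: Hab => /HU E; [rewrite -E | rewrite E].
Qed.

(* A connected graph whose arcs are exactly those of an injective successor
   map is a single cycle, listed by the orbit of any vertex. *)
Lemma successor_cycle (succ : 'I_n -> 'I_n) (i0 : 'I_n) : sconnected G ->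
  injective succ -> (forall j i, uarc G j i = (i == succ j)) ->
  exists s : seq 'I_n, [/\ s != [::], perm_eq s (enum 'I_n) &
    forall j i, uarc G j i = (i == next s j)].
Proof.
move=> Hcon succ_inj Harc; pose s := orbit succ i0.
have Hs w : w \in s.
  suff : w \in [set w | fconnect succ i0 w] by rewrite inE -fconnect_orbit.
  have Hi0 : i0 \in [set w | fconnect succ i0 w] by rewrite inE connect0.
  apply: (connected_closed_full Hcon _ Hi0).
  move=> a b; rewrite Harc !inE => /eqP ->; apply/idP/idP => H.
    by apply: connect_trans H (fconnect1 _ _).
  by apply: connect_trans H _; rewrite fconnect_sym //; exact: fconnect1.
exists s; split.
- by apply/eqP => E; have := Hs i0; rewrite E.
- apply: uniq_perm; [exact: orbit_uniq | exact: enum_uniq |].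
  by move=> w; rewrite Hs mem_enum.
- by move=> j i; rewrite Harc (eqP (next_cycle (cycle_orbit succ_inj i0) (Hs j))).
Qed.

(* If some vertex is not reached from any root, the graph is a signed cycle:
   the unreached vertices satisfy [rootless_successor], form a set closed
   under arcs, hence everything, and the successor map is then a bijection. *)
Lemma unreached_signed_cycle i0 : sconnected G -> ~~ reached i0 -> signed_cycle G.
Proof.
move=> Hcon Hi0; set U := [set i | ~~ reached i].
have reach_root r : root r -> reached r.
  by move=> Hr; apply/existsP; exists r; rewrite Hr connect0.
have Hin u : u \in U -> exists j, uarc G j u.
  rewrite inE => Hu.
  have : ~~ source u by apply: contra Hu => Hs; apply: reach_root; rewrite /root Hs.
  by rewrite negb_forall => /existsP [j]; rewrite negbK; exists j.
have Hcl u j : u \in U -> uarc G j u -> (j \in U) && (outdeg G j <= 1)%N.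
  rewrite !inE => Hu Hj; apply/andP; split.
    apply: contra Hu => /existsP [r /andP [Hr Hc]]; apply/existsP; exists r.
    by rewrite Hr (connect_trans Hc (connect1 Hj)).
  rewrite leqNgt; apply: contra Hu => Hd; apply: reach_root; apply/orP; right.
  by apply/existsP; exists j; rewrite Hj.
have Hsucc := rootless_successor Hin Hcl.
have Hall w : w \in U.
  have Hi0U : i0 \in U by rewrite inE.
  apply: (connected_closed_full Hcon _ Hi0U).
  move=> a b Hab; apply/idP/idP => [Ha|Hb]; last by case/andP: (Hcl _ _ Hb Hab).
  by have [u Hu Hau] := Hsucc a Ha; rewrite Hau in Hab; rewrite (eqP Hab).
have /fin_all_exists [succ Hsu] : forall w, exists u, forall v, uarc G w v = (v == u).
  by move=> w; have [u _ Hu] := Hsucc w (Hall w); exists u.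
have /fin_all_exists [pr Hpr] : forall u, exists j, uarc G j u.
  by move=> u; exact: Hin u (Hall u).
have succ_pr : cancel pr succ by move=> u; apply/esym/eqP; rewrite -Hsu.
have succ_inj : injective succ.
  apply: (can_inj (g := pr)); apply/(bij_can_sym (injF_bij (can_inj succ_pr))).
  exact: succ_pr.
split; first exact: successor_cycle Hcon succ_inj Hsu.
move=> j i; apply/negP => /andP [Hp Hn]; have := par_outdeg Hp Hn.
have Hj : uarc G j (succ j) by rewrite Hsu.
by case/andP: (Hcl _ _ (Hall (succ j)) Hj) => _; lia.
Qed.

Lemma not_cycle_within : sconnected G -> ~ signed_cycle G ->
  forall i, exists t, within t i.
Proof.
move=> Hcon Hnc i; apply: reached_within; apply: contraT => Hi.
by case: Hnc; exact: unreached_signed_cycle Hcon Hi.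
Qed.

End Roots.

Local Open Scope ring_scope.

Section Interaction.
Variables (n : nat) (G : sdigraph n) (lo hi : 'I_n -> int).
Variable f : ('I_n -> int) -> ('I_n -> int).
Hypothesis Hlh : forall i, lo i <= hi i.
Hypothesis Hfds : fds_on lo hi f G.

Definition upd (x : 'I_n -> int) (k : 'I_n) (v : int) : 'I_n -> int :=
  fun m => if m == k then v else x m.

Lemma inX_upd x k v : inX lo hi x -> lo k <= v <= hi k -> inX lo hi (upd x k v).
Proof. by move=> Hx Hv m; rewrite /upd; case: eqP => [->|_]. Qed.

Lemma incr_upd x k : incr x k = upd x k (x k + 1).
Proof.
by apply: functional_extensionality => m; rewrite /incr /upd; case: eqP => [->|].
Qed.

Lemma noarc_incr i k : ~~ uarc G k i -> forall x, inX lo hi x -> x k < hi k ->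
  f (incr x k) i = f x i.
Proof.
move=> Hk x Hx Hxk; have [Hp Hn] := Hfds k i.
move: Hk; rewrite /uarc negb_or => /andP[Hpk Hnk].
have A : ~ (f (incr x k) i - f x i > 0).
  by move=> H; move: Hpk; rewrite (proj2 Hp) //; exists x.
have B : ~ (f (incr x k) i - f x i < 0).
  by move=> H; move: Hnk; rewrite (proj2 Hn) //; exists x.
by apply/eqP; rewrite -subr_eq0; apply/eqP; move: A B; lia.
Qed.

Lemma incr_upd_same x k v : incr (upd x k v) k = upd x k (v + 1).
Proof. by apply: functional_extensionality => m; rewrite /incr /upd; case: eqP. Qed.

Section BooleanDomains.
Hypothesis Hbool : forall k, hi k = lo k + 1.

Lemma noarc_upd i k : ~~ uarc G k i -> forall x, inX lo hi x ->
  forall v, lo k <= v <= hi k -> f (upd x k v) i = f x i.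
Proof.
move=> Hk x Hx.
have Hlo v : lo k <= v <= hi k -> f (upd x k v) i = f (upd x k (lo k)) i.
  move=> Hv; have [->//|->] : v = lo k \/ v = lo k + 1 by have := Hbool k; lia.
  have Hw : inX lo hi (upd x k (lo k)) by apply: inX_upd Hx _; have := Hlh k; lia.
  have -> : upd x k (lo k + 1) = incr (upd x k (lo k)) k.
    by rewrite incr_upd /upd eqxx; apply: functional_extensionality => m; case: eqP.
  by apply: noarc_incr => //; rewrite /upd eqxx; have := Hbool k; lia.
move=> v Hv; rewrite Hlo // -(Hlo (x k)) ?Hx //.
by congr (f _ i); apply: functional_extensionality => m; rewrite /upd; case: eqP => // ->.
Qed.

Lemma dep_only i x y : inX lo hi x -> inX lo hi y ->
  (forall k, uarc G k i -> x k = y k) -> f x i = f y i.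
Proof.
move=> Hx Hy Hxy.
pose z (m : nat) := fun k : 'I_n => if (k < m)%N then y k else x k.
have Hz m : inX lo hi (z m) by move=> k; rewrite /z; case: ifP.
have E m : f (z m) i = f x i.
  elim: m => [|m IH].
    by congr (f _ i); apply: functional_extensionality => k; rewrite /z.
  case: (ltnP m n) => Hm.
    pose k := Ordinal Hm.
    have -> : z m.+1 = upd (z m) k (y k).
      apply: functional_extensionality => k'; rewrite /z /upd ltnS.
      case: eqP => [->|Hne] /=; first by rewrite leqnn.
      rewrite leq_eqVlt; case: eqP => // Hkm; case: Hne; exact: val_inj.
    case: (boolP (uarc G k i)) => Hk; last by rewrite noarc_upd.
    rewrite -IH; congr (f _ i); apply: functional_extensionality => k'.
    by rewrite /upd /z; case: eqP => // ->; rewrite /= ltnn; exact: (esym (Hxy _ Hk)).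
  rewrite -IH; congr (f _ i); apply: functional_extensionality => k'.
  have H1 : (k' < m)%N := leq_trans (ltn_ord k') Hm.
  by rewrite /z H1 (ltn_trans H1 (ltnSn m)).
rewrite -(E n); congr (f _ i); apply: functional_extensionality => k.
by rewrite /z ltn_ord.
Qed.

Lemma sole_input_determines i k x y : uarc G k i ->
  (forall k', uarc G k' i -> k' = k) ->
  inX lo hi x -> inX lo hi y -> f x i = f y i -> x k = y k.
Proof.
move=> Hk Honly Hx Hy.
have [w [Hw Hwk Hdiff]] :
    exists w, [/\ inX lo hi w, w k < hi k & f (incr w k) i <> f w i].
  have [Hp Hn] := Hfds k i.
  move: Hk; rewrite /uarc => /orP[/Hp|/Hn] [w [Hw Hwk Hd]];
    by exists w; split => // E; move: Hd; rewrite E; lia.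
have Hw' : inX lo hi (incr w k).
  by rewrite incr_upd; apply: inX_upd => //; have := Hw k; lia.
have Hval a : inX lo hi a -> f a i = if a k == lo k then f w i else f (incr w k) i.
  move=> Ha; have := Ha k; have := Hw k; have := Hbool k => Hb Hwr Har.
  case: eqP => Hak; apply: dep_only => // k' /Honly ->; rewrite ?incr_upd /upd ?eqxx; lia.
rewrite (Hval x Hx) (Hval y Hy); have := Hx k; have := Hy k; have := Hbool k.
case: eqP; case: eqP => Hyk Hxk Hb Hyr Hxr E;
  first [lia | by case: Hdiff; rewrite E | by case: Hdiff; rewrite -E].
Qed.

End BooleanDomains.
End Interaction.

Lemma injective_not_nilpotent n (lo hi : 'I_n -> int) f (k : 'I_n) :
  (forall i, lo i <= hi i) -> lo k < hi k -> maps_X lo hi f ->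
  (forall x y, inX lo hi x -> inX lo hi y -> f x = f y -> x = y) ->
  ~ nilpotent lo hi f.
Proof.
move=> Hlh Hk HX Hinj [m [_ [c Hc]]].
have iterX p x : inX lo hi x -> inX lo hi (iter p f x).
  by elim: p x => [//|p IH] x Hx /=; apply: HX; apply: IH.
have iter_inj p x y : inX lo hi x -> inX lo hi y -> iter p f x = iter p f y -> x = y.
  elim: p x y => [//|p IH] x y Hx Hy /= E.
  by apply: IH => //; apply: Hinj => //; exact: iterX.
have Hlo : inX lo hi lo by move=> i; have := Hlh i; lia.
have Hlo1 : inX lo hi (incr lo k).
  by move=> i; rewrite /incr; case: eqP => [->|_]; have := Hlh i; lia.
have /(congr1 (fun z => z k)) : lo = incr lo k.
  by apply: (iter_inj m) => //; apply: functional_extensionality => i; rewrite !Hc.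
by rewrite /incr eqxx; lia.
Qed.

Lemma card_X_le2 n (lo hi : 'I_n -> int) (G : sdigraph n) k :
  degree_bounded lo hi G -> (outdeg G k <= 1)%N -> card_X lo hi k <= 2.
Proof. by move=> /(_ k); case: ifP => [_ -> //|_ Hk Hd]; apply: le_trans Hk _; lia. Qed.

Section SignedCycle.
Variables (n : nat) (G : sdigraph n).
Hypothesis Hcyc : signed_cycle G.

Lemma cycle_successor : exists (succ : 'I_n -> 'I_n) (k0 : 'I_n),
  injective succ /\ forall j i, uarc G j i = (i == succ j).
Proof.
case: Hcyc => [[[|k0 s'] [//= _ Hperm Harc]] _].
have Us : uniq (k0 :: s') by rewrite (perm_uniq Hperm) enum_uniq.
by exists (next (k0 :: s')), k0; split; first exact: can_inj (prev_next Us).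
Qed.

Lemma cycle_outdeg j : (outdeg G j <= 1)%N.
Proof.
have [succ [_ [_ Harc]]] := cycle_successor.
have Hnopar : forall i, ~~ (pos G j i && neg G j i) by case: Hcyc.
set P := [set i | pos G j i]; set N := [set i | neg G j i].
have -> : outdeg G j = (#|P :|: N| + #|P :&: N|)%N by rewrite cardsUI.
have -> : P :&: N = set0.
  by apply/setP=> i; rewrite !inE; apply/negbTE; exact: Hnopar.
rewrite cards0 addn0 -(cards1 (succ j)); apply: subset_leq_card.
by apply/subsetP=> i; rewrite !inE -Harc /uarc.
Qed.

(* On a signed cycle a degree-bounded FDS has Boolean components and is
   injective, each component being copied (or negated) from its predecessor;
   so it is never nilpotent. *)
Lemma cycle_not_nilpotent (lo hi : 'I_n -> int) (f : ('I_n -> int) -> 'I_n -> int) :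
  (forall i, lo i <= hi i) -> maps_X lo hi f -> fds_on lo hi f G ->
  degree_bounded lo hi G -> ~ nilpotent lo hi f.
Proof.
move=> Hlh HX Hfds Hdb.
have [succ [k0 [succ_inj Harc]]] := cycle_successor.
have Hsucc j : uarc G j (succ j) by rewrite Harc.
have Hbool k : hi k = lo k + 1.
  have := card_X_le2 Hdb (cycle_outdeg k); rewrite /card_X.
  have [Hp Hn] := Hfds k (succ k).
  by move: (Hsucc k); rewrite /uarc => /orP[/Hp|/Hn] [x [Hx Hxk _]]; have := Hx k; lia.
apply: (injective_not_nilpotent (k := k0) Hlh) => //; first by rewrite Hbool; lia.
move=> x y Hx Hy Hf; apply: functional_extensionality => j.
apply: (sole_input_determines Hlh Hfds Hbool (Hsucc j)) => //; last by rewrite Hf.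
by move=> k; rewrite Harc => /eqP /succ_inj.
Qed.

End SignedCycle.

Section Construction.
Variables (n : nat) (G : sdigraph n).
Hypothesis Hwithin : forall i, exists t, within G t i.

Definition par (j i : 'I_n) := pos G j i && neg G j i.
Definition has_par (j : 'I_n) := [exists i, par j i].
Definition has_single (j : 'I_n) := [exists i, uarc G j i && ~~ par j i].

Definition dom_size (j : 'I_n) : nat :=
  if (2 <= outdeg G j)%N then (3 + (has_par j && has_single j))%N
  else if (0 < outdeg G j + indeg G j)%N then 2%N else 1%N.
Definition lo0 (j : 'I_n) : int := 0.
Definition top (j : 'I_n) : int := (dom_size j)%:Z - 1.
(* the nonzero value taken by the j-th component *)
Definition active (j : 'I_n) : int := if has_par j then 2 else 1.

Definition depth (i : 'I_n) : nat := ex_minn (Hwithin i).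
Definition blocker (i : 'I_n) := odflt i [pick j | uarc G j i && (2 <= outdeg G j)%N].
Definition parent t (i : 'I_n) := odflt i [pick j | uarc G j i && within G t j].

(* The polarity of i, computed along a shortest path from a root: it is
   chosen so that the stable value of the parent never triggers i. *)
Fixpoint polarity_at (t : nat) (i : 'I_n) : bool :=
  if t is t'.+1 then
    if within G t' i then polarity_at t' i
    else pos G (parent t' i) i == polarity_at t' (parent t' i)
  else if blocked G i then pos G (blocker i) i else true.
Definition polarity (i : 'I_n) := polarity_at (depth i) i.

(* [rest i] is the value to which the i-th component eventually settles;
   the j-th input triggers i when it takes the value [trigger i j]. *)
Definition rest (i : 'I_n) : int := if polarity i then 0 else active i.
Definition trigger (i j : 'I_n) : int :=
  if par j i then 1 else if pos G j i == polarity i then top j else 0.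
Definition triggered (x : 'I_n -> int) (i : 'I_n) :=
  [forall j, uarc G j i ==> (x j == trigger i j)].

Definition F (x : 'I_n -> int) (i : 'I_n) : int :=
  if source G i then 0 else if triggered x i == polarity i then active i else 0.

Lemma depth_within i : within G (depth i) i.
Proof. by rewrite /depth; case: ex_minnP. Qed.

Lemma depth_min i t : within G t i -> (depth i <= t)%N.
Proof. by rewrite /depth; case: ex_minnP => m _ H /H. Qed.

Lemma polarity_at_stable t i : within G t i -> polarity_at t i = polarity i.
Proof.
move=> H; rewrite -(subnK (depth_min H)) /polarity.
elim: (t - depth i)%N => [//|d IH] /=.
by rewrite (within_mono (leq_addl d (depth i)) (depth_within i)).
Qed.

Lemma polarity_source i : source G i -> polarity i.
Proof.
move=> Hs; have H0 : within G 0 i by rewrite /= /root Hs.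
rewrite -(polarity_at_stable H0) /=; case: ifP => // /existsP [j /andP [Hj _]].
by move: Hs => /forallP /(_ j); rewrite Hj.
Qed.

Lemma polarity_blocked i : blocked G i -> polarity i = pos G (blocker i) i.
Proof.
move=> Hb; have H0 : within G 0 i by rewrite /= /root Hb orbT.
by rewrite -(polarity_at_stable H0) /= Hb.
Qed.

Lemma blocker_spec i : blocked G i ->
  uarc G (blocker i) i && (2 <= outdeg G (blocker i))%N.
Proof.
move=> /existsP [j Hj]; rewrite /blocker; case: pickP => [k //|H0].
by rewrite H0 in Hj.
Qed.

Lemma parent_spec t i : within G t.+1 i -> ~~ within G t i ->
  uarc G (parent t i) i && within G t (parent t i).
Proof.
rewrite /= => /orP [H|/existsP [j Hj]] Hn; first by rewrite H in Hn.
by rewrite /parent; case: pickP => [k //|H0]; rewrite H0 in Hj.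
Qed.

Lemma polarity_parent t i : within G t.+1 i -> ~~ within G t i ->
  polarity i = (pos G (parent t i) i == polarity (parent t i)).
Proof.
move=> Ht Hnt; have /andP [_ Hp] := parent_spec Ht Hnt.
have -> : polarity i = polarity_at t.+1 i.
  by rewrite (polarity_at_stable Ht).
by rewrite /= (negbTE Hnt) (polarity_at_stable Hp).
Qed.

Lemma nonsource j i : uarc G j i -> ~~ source G i.
Proof.
by move=> H; rewrite /source negb_forall; apply/existsP; exists j; rewrite negbK.
Qed.

Lemma has_par_outdeg j : has_par j -> (2 <= outdeg G j)%N.
Proof. by case/existsP=> i /andP [Hp Hn]; exact: par_outdeg Hp Hn. Qed.

Lemma top_ge0 j : 0 <= top j.
Proof. by rewrite /top /dom_size; case: ifP => _; [|case: ifP => _]; lia. Qed.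

Lemma top_out j i : uarc G j i -> 1 <= top j.
Proof.
move=> /uarc_outdeg H; rewrite /top /dom_size; case: ifP => _; first lia.
by have -> : (0 < outdeg G j + indeg G j)%N by lia.
Qed.

Lemma top_out2 j : (2 <= outdeg G j)%N -> 2 <= top j.
Proof. by rewrite /top /dom_size => ->; lia. Qed.

Lemma active_range i j : uarc G j i -> 1 <= active i <= top i.
Proof.
move=> /uarc_indeg Hin; rewrite /active; case: (boolP (has_par i)) => Hp.
  by have := top_out2 (has_par_outdeg Hp); lia.
have Hdeg : (0 < outdeg G i + indeg G i)%N by lia.
by rewrite /top /dom_size Hdeg; case: ifP => _; lia.
Qed.

Lemma trigger_range j i : uarc G j i -> 0 <= trigger i j <= top j.
Proof.
move=> Hj; have := top_out Hj; rewrite /trigger; case: ifP => [/andP [Hp Hn]|_].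
  by have := top_out2 (par_outdeg Hp Hn); lia.
by case: ifP => _; lia.
Qed.

Lemma F_values x i : F x i = 0 \/ F x i = active i.
Proof. by rewrite /F; case: ifP; [left | case: ifP; auto]. Qed.

Lemma F_maps_X : maps_X lo0 top F.
Proof.
move=> x _ i; rewrite /lo0; case: (boolP (source G i)) => Hs.
  by rewrite /F Hs; have := top_ge0 i; lia.
move: Hs; rewrite /source negb_forall => /existsP [j]; rewrite negbK => /active_range.
by case: (F_values x i) => ->; lia.
Qed.

Definition settles (i : 'I_n) :=
  exists T, forall x s, (T <= s)%N -> iter s F x i = rest i.

Lemma settles_source i : source G i -> settles i.
Proof.
by move=> Hs; exists 1%N => x [//|s] _; rewrite iterS /F Hs /rest polarity_source.
Qed.

Lemma settles_of_input i j T : uarc G j i ->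
  (forall x s, (T <= s)%N -> iter s F x j != trigger i j) -> settles i.
Proof.
move=> Hj Hnot; exists T.+1 => x [//|s] Hs; rewrite iterS /F (negbTE (nonsource Hj)).
have -> : triggered (iter s F x) i = false.
  by apply/negbTE/negP => /forallP /(_ j); rewrite Hj /= (negbTE (Hnot x s Hs)).
by rewrite /rest; case: (polarity i).
Qed.

(* the value set {0, active j} of a blocker avoids its trigger value *)
Lemma blocker_never_triggers i y : blocked G i ->
  F y (blocker i) != trigger i (blocker i).
Proof.
move=> Hb; have /andP [Hj Hd] := blocker_spec Hb; set j := blocker i in Hj Hd *.
rewrite /trigger (polarity_blocked Hb) -/j eqxx.
case: (boolP (par j i)) => Hp.
  have Hact : active j = 2.
    by rewrite /active; case: (boolP (has_par j)) => // /negP []; apply/existsP; exists i.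
  by case: (F_values y j) => ->; rewrite ?Hact.
have Hsg : has_single j by apply/existsP; exists i; rewrite Hj Hp.
case: (F_values y j) => ->; rewrite /top /dom_size Hd Hsg /active;
  by case: (has_par j) => /=; lia.
Qed.

Lemma parent_never_triggers i j : uarc G j i -> (outdeg G j <= 1)%N ->
  polarity i = (pos G j i == polarity j) -> rest j != trigger i j.
Proof.
move=> Hj Hd Hpol.
have Hnp : ~~ par j i by apply/negP => /andP [Hp Hn]; have := par_outdeg Hp Hn; lia.
have Hnhp : ~~ has_par j by apply/negP => /has_par_outdeg; lia.
have Htop : top j = 1.
  have := uarc_outdeg Hj => Hpos; rewrite /top /dom_size ifF; last lia.
  by rewrite addn_gt0 Hpos.
rewrite /rest /active /trigger (negbTE Hnp) (negbTE Hnhp) Hpol Htop.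
by case: (pos G j i); case: (polarity j).
Qed.

Lemma within_settles t i : within G t i -> settles i.
Proof.
elim: t i => [|t IH] i.
  case/orP => [/settles_source //|Hb]; have /andP [Hj _] := blocker_spec Hb.
  by apply: (settles_of_input (T := 1) Hj) => x [//|s] _; exact: blocker_never_triggers.
case: (boolP (within G t i)) => [/IH //|Hnt] Ht.
have /andP [Hj Hp] := parent_spec Ht Hnt; set j := parent t i in Hj Hp.
have [T HT] := IH j Hp.
have Hd : (outdeg G j <= 1)%N.
  rewrite leqNgt; apply: contra Hnt => Hd; apply: (within_mono (leq0n t)).
  by rewrite /= /root; apply/orP; right; apply/existsP; exists j; rewrite Hj.
apply: (settles_of_input (T := T) Hj) => x s Hs; rewrite HT //.
exact: parent_never_triggers Hj Hd (polarity_parent Ht Hnt).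
Qed.

Lemma F_nilpotent : nilpotent lo0 top F.
Proof.
have /fin_all_exists [T HT] :
    forall i, exists T, forall x s, (T <= s)%N -> iter s F x i = rest i.
  by move=> i; have [t Ht] := Hwithin i; exact: within_settles Ht.
exists (\max_i T i).+1; split => //; exists rest => x _ i; apply: HT.
exact: leq_trans (leq_bigmax i) (leqnSn _).
Qed.

(* only the j-th input matters for [triggered] once the others are set to
   their trigger values *)
Definition trigger_state (i j : 'I_n) (a : int) : 'I_n -> int :=
  upd (fun k => if uarc G k i then trigger i k else 0) j a.

Lemma trigger_state_inX i j a : 0 <= a <= top j -> inX lo0 top (trigger_state i j a).
Proof.
move=> Ha k; rewrite /trigger_state /upd /lo0; case: eqP => [->//|_].
by case: ifP => [/trigger_range //|_]; have := top_ge0 k; lia.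
Qed.

Lemma triggered_state i j a : uarc G j i ->
  triggered (trigger_state i j a) i = (a == trigger i j).
Proof.
move=> Hj; apply/forallP/idP => [/(_ j)|H k].
  by rewrite Hj /trigger_state /upd /= eqxx.
apply/implyP => Hk; rewrite /trigger_state /upd /=.
by case: (eqVneq k j) => [->|_]; rewrite ?Hk.
Qed.

Lemma triggered_switch i j (b : bool) : uarc G j i ->
  (exists x, [/\ inX lo0 top x, x j < top j, triggered (incr x j) i = b
                 & triggered x i = ~~ b]) <->
  (if b then 0 < trigger i j else trigger i j < top j).
Proof.
move=> Hj; have Hr := trigger_range Hj; split.
  move=> [x [Hx Hxj Hi Hx0]]; have := Hx j; rewrite /lo0 => Hxr.
  case: b Hi Hx0 => /= Hi Hx0.
    by move: Hi => /forallP /(_ j); rewrite Hj /incr eqxx => /eqP; lia.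
  by move: Hx0 => /forallP /(_ j); rewrite Hj => /eqP; lia.
move=> Hb.
have [a [Ha Hup Hat]] : exists a, [/\ 0 <= a < top j, (a + 1 == trigger i j) = b
                                    & (a == trigger i j) = ~~ b].
  by case: b Hb => /= Hb; [exists (trigger i j - 1) | exists (trigger i j)];
    split; try apply/eqP; lia.
exists (trigger_state i j a); split.
- by apply: trigger_state_inX; lia.
- by rewrite /trigger_state /upd eqxx; lia.
- by rewrite /trigger_state incr_upd_same triggered_state.
- by rewrite triggered_state.
Qed.

Lemma F_diff_pos j i y z : uarc G j i ->
  (0 < F y i - F z i) = (triggered y i == polarity i) && (triggered z i == ~~ polarity i).
Proof.
move=> Hj; have := active_range Hj; rewrite /F (negbTE (nonsource Hj)).
by case: (triggered y i); case: (triggered z i); case: (polarity i) => /= H; lia.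
Qed.

Lemma F_diff_neg j i y z : uarc G j i ->
  (F y i - F z i < 0) = (triggered y i == ~~ polarity i) && (triggered z i == polarity i).
Proof.
move=> Hj; have := active_range Hj; rewrite /F (negbTE (nonsource Hj)).
by case: (triggered y i); case: (triggered z i); case: (polarity i) => /= H; lia.
Qed.

Lemma pos_trigger j i : uarc G j i ->
  pos G j i = if polarity i then 0 < trigger i j else trigger i j < top j.
Proof.
move=> Hj; have := top_out Hj; rewrite /trigger /par.
case Hp: (pos G j i); case Hn: (neg G j i) => /=.
- by have := top_out2 (par_outdeg Hp Hn); case: (polarity i) => /=; lia.
- by case: (polarity i) => /=; lia.
- by case: (polarity i) => /=; lia.
- by move: Hj; rewrite /uarc Hp Hn.
Qed.

Lemma neg_trigger j i : uarc G j i ->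
  neg G j i = if ~~ polarity i then 0 < trigger i j else trigger i j < top j.
Proof.
move=> Hj; have := top_out Hj; rewrite /trigger /par.
case Hp: (pos G j i); case Hn: (neg G j i) => /=.
- by have := top_out2 (par_outdeg Hp Hn); case: (polarity i) => /=; lia.
- by case: (polarity i) => /=; lia.
- by case: (polarity i) => /=; lia.
- by move: Hj; rewrite /uarc Hp Hn.
Qed.

Lemma jump_switch j i (b : bool) (D : int -> bool) : uarc G j i ->
  (forall x, D (F (incr x j) i - F x i) =
             (triggered (incr x j) i == b) && (triggered x i == ~~ b)) ->
  (if b then 0 < trigger i j else trigger i j < top j) <->
  (exists x, [/\ inX lo0 top x, x j < top j & D (F (incr x j) i - F x i)]).
Proof.
move=> Hj HD; rewrite -(triggered_switch b Hj).
split=> -[x [Hx Hxj H]]; exists x; split => //.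
- by rewrite HD H; apply/andP; split; apply/eqP.
- by move: H; rewrite HD => /andP [/eqP ->].
- by move: H; rewrite HD => /andP [_ /eqP ->].
Qed.

(* the interaction graph of F is G: non-arcs are ignored by [triggered], and
   for an arc the sign criteria of [pos_trigger], [neg_trigger] match the
   switching criteria of [triggered_switch] *)
Lemma F_fds : fds_on lo0 top F G.
Proof.
move=> j i; case: (boolP (uarc G j i)) => Hj; last first.
  have E x : F (incr x j) i = F x i.
    suff E : triggered (incr x j) i = triggered x i by rewrite /F E.
    apply: eq_forallb => k.
    by case: (eqVneq k j) => [->|Hne]; rewrite ?(negbTE Hj) // /incr (negbTE Hne).
  move: Hj; rewrite /uarc negb_or => /andP [/negbTE -> /negbTE ->].
  by split; split => // -[x [_ _]]; rewrite E subrr ltxx.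
split; [rewrite (pos_trigger Hj) | rewrite (neg_trigger Hj)].
  apply: (jump_switch (b := polarity i) (D := fun d => 0 < d) Hj) => x.
  by rewrite (F_diff_pos _ _ Hj).
apply: (jump_switch (b := ~~ polarity i) (D := fun d => d < 0) Hj) => x.
by rewrite (F_diff_neg _ _ Hj) negbK.
Qed.

Lemma par_single_outdeg j : has_par j -> has_single j -> (3 <= outdeg G j)%N.
Proof.
case/existsP => a /andP [Hpa Hna] /existsP [b /andP [Hb Hnp]].
have Hab : a != b by apply: contraNneq Hnp => <-; rewrite /par Hpa Hna.
rewrite /outdeg; move: Hb Hnp; rewrite /uarc /par => /orP [] H _.
- have := card_pred_ge2 (fun i => pos G j i) Hpa H Hab.
  have := card_pred_ge1 (fun i => neg G j i) Hna; lia.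
- have := card_pred_ge2 (fun i => neg G j i) Hna H Hab.
  have := card_pred_ge1 (fun i => pos G j i) Hpa; lia.
Qed.

Lemma F_degree_bounded : degree_bounded lo0 top G.
Proof.
move=> i; rewrite /card_X /top /lo0 /dom_size.
case: (boolP (2 <= outdeg G i)%N) => H2.
  have -> : (outdeg G i == 0%N) = false by apply/eqP; lia.
  case: (boolP (has_par i && has_single i)) => /= [/andP [Hp Hs]|_]; last lia.
  by have := par_single_outdeg Hp Hs; lia.
case: (boolP (0 < outdeg G i + indeg G i)%N) => H0.
  by case: ifP => [/andP [/eqP A B]|/negbT]; [|rewrite negb_and => /orP []]; lia.
by rewrite ifF; lia.
Qed.

End Construction.

Theorem corollary4 (n : nat) (G : sdigraph n) :
  sconnected G ->
  ((exists (lo hi : 'I_n -> int) (f : ('I_n -> int) -> ('I_n -> int)),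
      [/\ (forall i, lo i <= hi i), maps_X lo hi f, fds_on lo hi f G,
          degree_bounded lo hi G & nilpotent lo hi f])
   <-> ~ signed_cycle G).
Proof.
move=> Hcon; split.
  move=> [lo [hi [f [Hlh HX Hfds Hdb Hnil]]]] Hcyc.
  exact: (cycle_not_nilpotent Hcyc Hlh HX Hfds Hdb Hnil).
move=> Hnc; have Hwithin := not_cycle_within Hcon Hnc.
exists (@lo0 n), (top G), (F Hwithin); split.
- exact: top_ge0.
- exact: F_maps_X.
- exact: F_fds.
- exact: F_degree_bounded.
- exact: F_nilpotent.
Qed.
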